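(* Let $f=(f_1,\dots,f_P)^\top:\mathbb{R}^N\to\mathbb{R}^P$ and $g=(g_1,\dots,g_M)^\top:\mathbb{R}^N\to\mathbb{R}^M$ satisfy: each $f_i$ is strictly convex and continuously differentiable; each $g_j$ is convex and continuously differentiable; the problem $\min\{f(x)\mid g_j(x)\le 0,\ j=1,\dots,M\}$ is bounded; and there exists $\bar x\in\mathbb{R}^N$ with $g_j(\bar x)<0$ for all $j=1,\dots,M$. Let $\mathbb{X}:=\{x\in\mathbb{R}^N\mid g_j(x)\le 0,\ j=1,\dots,M\}$ and $\mathcal{W}:=\{w\in\mathbb{R}^P_+\mid \mathbf{1}^\top w=1\}$. Let $z:\mathcal{W}\to\mathbb{R}^N$ be an arbitrary neural network, and define $x:\mathcal{W}\to\mathbb{R}^N$ by \[x(w):=(1-t^*(z(w)))\,z(w)+t^*(z(w))\,\bar x,\qquad t^*(z):=\max_{j:\ g_j(z)>0}\left\{\frac{g_j(z)}{g_j(z)-g_j(\bar x)}\right\},\] where $t^*(z):=0$ if $g_j(z)\le 0$ for all $j$. Then $x(w)\in\mathbb{X}$ for every $w\in\mathcal{W}$.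
   Context: $\mathbf{1}=(1,\dots,1)^\top\in\mathbb{R}^P$. The problem is bounded if there is $y\in\mathbb{R}^P$ with $f(x)\in y+\mathbb{R}^P_+$ for all $x\in\mathbb{X}$. A neural network $\mathcal{W}\to\mathbb{R}^N$ is a map of the form $y_{\ell+1}$ where $y_0(w)=w$ and $y_l(w)=\Phi_l(\theta_{l,b}+\theta_{l,w}y_{l-1}(w))$ for $l=1,\dots,\ell+1$, with bias vectors $\theta_{l,b}$, weight matrices $\theta_{l,w}$ of compatible sizes, and activation functions $\Phi_l$. *)

From HB Require Import structures.
From mathcomp Require Import all_boot all_order all_algebra.
From mathcomp Require Import all_classical all_reals all_analysis.
Set Implicit Arguments. Unset Strict Implicit. Unset Printing Implicit Defensive.
Import Order.TTheory GRing.Theory Num.Theory.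
Import numFieldNormedType.Exports.
Local Open Scope ring_scope.

Section Defs.
Variable R : realType.

Definition convex_fun (N : nat) (h : 'cV[R]_N -> R) : Prop :=
  forall (x y : 'cV[R]_N) (t : R), 0 <= t -> t <= 1 ->
    h ((1 - t) *: x + t *: y) <= (1 - t) * h x + t * h y.

Definition strictly_convex_fun (N : nat) (h : 'cV[R]_N -> R) : Prop :=
  forall (x y : 'cV[R]_N) (t : R), x != y -> 0 < t -> t < 1 ->
    h ((1 - t) *: x + t *: y) < (1 - t) * h x + t * h y.

(* continuously differentiable: differentiable everywhere, and the
   derivative x |-> 'd h x v is continuous for every direction v
   (in finite dimension this is continuity of the derivative) *)
Definition C1_fun (N : nat) (h : 'cV[R]_N -> R) : Prop :=
  (forall x, differentiable h x) /\
  (forall v : 'cV[R]_N, continuous (fun x => ('d h x : 'cV[R]_N -> R) v)).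

Definition feasible (N M : nat) (g : 'I_M -> 'cV[R]_N -> R) (x : 'cV[R]_N) : Prop :=
  forall j : 'I_M, g j x <= 0.

Definition mo_bounded (N P M : nat) (f : 'I_P -> 'cV[R]_N -> R)
    (g : 'I_M -> 'cV[R]_N -> R) : Prop :=
  exists y : 'cV[R]_P, forall x, feasible g x -> forall i : 'I_P, y i 0 <= f i x.

Definition weight_simplex (P : nat) (w : 'cV[R]_P) : Prop :=
  (forall i : 'I_P, 0 <= w i 0) /\ \sum_(i < P) w i 0 = 1.

(* neural networks R^n -> R^m with l+1 >= 1 layers
   y_l = Phi_l (theta_{l,b} + theta_{l,w} y_{l-1}) *)
Inductive nnet : nat -> nat -> Type :=
| nn_layer (n m : nat) (b : 'cV[R]_m) (W : 'M[R]_(m, n))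
    (Phi : 'cV[R]_m -> 'cV[R]_m) : nnet n m
| nn_cons (n k m : nat) (prev : nnet n k) (b : 'cV[R]_m) (W : 'M[R]_(m, k))
    (Phi : 'cV[R]_m -> 'cV[R]_m) : nnet n m.

Fixpoint nn_eval (n m : nat) (net : nnet n m) : 'cV[R]_n -> 'cV[R]_m :=
  match net in nnet n m return 'cV[R]_n -> 'cV[R]_m with
  | nn_layer _ _ b W Phi => fun y => Phi (b + W *m y)
  | nn_cons _ _ _ prev b W Phi => fun y => Phi (b + W *m nn_eval prev y)
  end.

Definition tstar (N M : nat) (g : 'I_M -> 'cV[R]_N -> R) (xbar z : 'cV[R]_N) : R :=
  if [exists j : 'I_M, 0 < g j z] then
    \big[Num.max/0]_(j < M | 0 < g j z) (g j z / (g j z - g j xbar))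
  else 0.

Definition projected_net (N P M : nat) (g : 'I_M -> 'cV[R]_N -> R)
    (xbar : 'cV[R]_N) (z : nnet P N) (w : 'cV[R]_P) : 'cV[R]_N :=
  let zw := nn_eval z w in
  (1 - tstar g xbar zw) *: zw + tstar g xbar zw *: xbar.

End Defs.

From HB Require Import structures.
From mathcomp Require Import all_boot all_order all_algebra.
From mathcomp Require Import all_classical all_reals all_analysis.
Import Order.TTheory GRing.Theory Num.Theory.
Import numFieldNormedType.Exports.
From mathcomp Require Import ring.
Local Open Scope ring_scope.

(* If g_j(z) > 0 then, since g_j(xbar) < 0, the affine interpolation
   (1 - t) g_j(z) + t g_j(xbar) vanishes at t = g_j(z) / (g_j(z) - g_j(xbar)),
   a number in [0, 1]; t^*(z) is the largest of these thresholds, so the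
   interpolation is nonpositive at t^*(z) for every j, and by convexity of g_j
   so is g_j at the convex combination x(w). *)

Section InterpolationThreshold.
Variable R : realFieldType.

Lemma threshold_le1 (a b : R) : b < 0 -> 0 < a -> a / (a - b) <= 1.
Proof.
move=> b_lt0 a_gt0.
rewrite ler_pdivrMr; last by rewrite subr_gt0 (lt_trans b_lt0 a_gt0).
by rewrite mul1r lerDl oppr_ge0 ltW.
Qed.

Lemma interpolation_le0 (a b t : R) :
  b < 0 -> 0 <= t <= 1 -> (0 < a -> a / (a - b) <= t) ->
  (1 - t) * a + t * b <= 0.
Proof.
move=> b_lt0 /andP[t_ge0 t_le1] threshold_le.
have [a_gt0 | a_le0] := ltP 0 a.
- have ab_gt0 : 0 < a - b by rewrite subr_gt0 (lt_trans b_lt0 a_gt0).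
  have := threshold_le a_gt0; rewrite ler_pdivrMr // => a_le.
  have -> : (1 - t) * a + t * b = a - t * (a - b) by ring.
  by rewrite subr_le0.
- rewrite -[leRHS](addr0 0) lerD // ?mulr_ge0_le0 ?subr_ge0 //.
  exact: ltW.
Qed.

End InterpolationThreshold.

Section Tstar.
Variables (R : realType) (N M : nat).
Variables (g : 'I_M -> 'cV[R]_N -> R) (xbar : 'cV[R]_N).
Hypothesis g_xbar_lt0 : forall j, g j xbar < 0.

Lemma le_tstar (z : 'cV[R]_N) (j : 'I_M) :
  0 < g j z -> g j z / (g j z - g j xbar) <= tstar g xbar z.
Proof.
move=> gz_gt0; rewrite /tstar ifT; last by apply/existsP; exists j.
exact: le_bigmax_cond.
Qed.

Lemma tstar_ge0 (z : 'cV[R]_N) : 0 <= tstar g xbar z.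
Proof. by rewrite /tstar; case: ifP => // _; exact: bigmax_ge_id. Qed.

Lemma tstar_le1 (z : 'cV[R]_N) : tstar g xbar z <= 1.
Proof.
rewrite /tstar; case: ifP => _; last exact: ler01.
by apply: bigmax_le => [|j gz_gt0]; [exact: ler01 | exact: threshold_le1].
Qed.

Lemma convex_tstar_feasible (z : 'cV[R]_N) :
  (forall j, convex_fun (g j)) ->
  feasible g ((1 - tstar g xbar z) *: z + tstar g xbar z *: xbar).
Proof.
move=> g_convex j.
apply: le_trans (g_convex j _ _ _ (tstar_ge0 z) (tstar_le1 z)) _.
apply: interpolation_le0 => //; first by rewrite tstar_ge0 tstar_le1.
exact: le_tstar.
Qed.

End Tstar.

Theorem proposition3p1 (R : realType) (N P M : nat)
    (f : 'I_P -> 'cV[R]_N -> R) (g : 'I_M -> 'cV[R]_N -> R) (xbar : 'cV[R]_N) :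
  (forall i, strictly_convex_fun (f i) /\ C1_fun (f i)) ->
  (forall j, convex_fun (g j) /\ C1_fun (g j)) ->
  mo_bounded f g ->
  (forall j, g j xbar < 0) ->
  forall (z : nnet R P N) (w : 'cV[R]_P),
    weight_simplex w -> feasible g (projected_net g xbar z w).
Proof.
move=> _ g_convex_C1 _ g_xbar_lt0 z w _.
apply: convex_tstar_feasible => // j.
by case: (g_convex_C1 j).
Qed.
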